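(* Let $p$ be an odd prime and $a\in\mathbb Z_p$ with $a\not\equiv 0,-1\pmod p$. Then, as polynomials in an indeterminate $t$ with coefficients in $\mathbb Z_p$ (congruence coefficientwise), $$\sum_{k=0}^{p-2}\binom ak\binom{-1-a}k\binom{2k}k\frac{(-t(t+1))^k}{k+1}\equiv\Big(\sum_{k=0}^{p-1}\binom ak\binom{-1-a}k(-t)^k\Big)^2-\frac{t+1}{a(a+1)t}\Big(\sum_{k=0}^{p-1}\binom ak\binom{-1-a}k k(-t)^k\Big)^2\pmod{p^2},$$ where the last term is a polynomial in $t$ since the squared sum is divisible by $t^2$.
   Context: $\mathbb Z_p$ denotes the set of rational numbers whose denominator is not divisible by $p$; for $u,v\in\mathbb Z_p$, $u\equiv v\pmod{p^r}$ means $(u-v)/p^r\in\mathbb Z_p$. For $a$ rational, the generalized binomial coefficient is $\binom a0=1$ and $\binom ak=\frac{a(a-1)\cdots(a-k+1)}{k!}$ for $k\ge1$. *)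

From mathcomp Require Import all_boot all_order all_algebra.
Set Implicit Arguments. Unset Strict Implicit. Unset Printing Implicit Defensive.
Import Order.TTheory GRing.Theory Num.Theory.
Local Open Scope ring_scope.

(* x is in Z_p : the (reduced) denominator of x is not divisible by p *)
Definition pint (p : nat) (x : rat) : bool := ~~ (p %| `|denq x|)%N.

Definition congr_mod (p r : nat) (u v : rat) : Prop :=
  pint p ((u - v) / (p ^ r)%:R).

Definition binq (a : rat) (k : nat) : rat :=
  (\prod_(i < k) (a - i%:R)) / (k`!)%:R.

Definition pcongr_mod (p r : nat) (P Q : {poly rat}) : Prop :=
  forall i : nat, congr_mod p r P`_i Q`_i.

(* Write [x = a (a + 1)]: the coefficients [binq a k * binq (-1 - a) k] are
   [(-1)^k] times polynomials in [x], and after cancelling [x] from [T = t S'],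
   each coefficient of the difference of the two sides is [Q (a (a + 1))] for a
   polynomial [Q] with coefficients in Z_(p).
   For [a = n] a natural number with [0 < n < p - 1] the sums terminate and the
   congruence is an exact identity: [S = \sum_k c_k t^k] satisfies the Legendre
   equation [((t^2 + t) S')' = x S], so [S^2] is killed by the symmetric square of
   that operator, as is [Y (t^2 + t)] where [Y = \sum_k c_k binom(2k, k) z^k] solves
   the corresponding third-order equation; uniqueness gives Clausen's formula
   [S^2 = Y (t^2 + t)], and integrating once yields [x L = x S^2 - (t^2 + t) S'^2].
   For general [a = r + p s] with [0 < r < p - 1], [P y := Q (y (y + 1))] vanishes
   at [r] and, by the symmetry [y |-> -1 - y], at [r - p]; hence
   [P (r + p s) = (1 + s) P r - s P (r - p) = 0 (mod p^2)]. *)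

From HB Require Import structures.
From mathcomp Require Import all_boot all_order all_algebra.
From mathcomp Require Import zify ring.
Set Implicit Arguments. Unset Strict Implicit. Unset Printing Implicit Defensive.
Import Order.TTheory GRing.Theory Num.Theory.
Local Open Scope ring_scope.

Section PIntegral.
Variable p : nat.
Hypothesis p_prime : prime p.

Lemma pintP x :
  reflect (exists2 d : int, ~~ (p %| `|d|)%N & exists m : int, x = m%:~R / d%:~R)
          (pint p x).
Proof.
apply: (iffP idP) => [px | [d pd [m ->]]].
  by exists (denq x) => //; exists (numq x); rewrite divq_num_den.
rewrite /pint; case: divqP pd => [|k y k_neq0]; first by rewrite dvdn0.
by rewrite abszM Euclid_dvdM // negb_or => /andP[].
Qed.

Lemma pint_int (z : int) : pint p z%:~R.
Proof.
apply/pintP; exists 1; last by exists z; rewrite divr1.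
by rewrite dvdn1; apply: contraTneq p_prime => ->.
Qed.

Lemma pint_invn n : ~~ (p %| n)%N -> pint p n%:R^-1.
Proof. by move=> pn; apply/pintP; exists n => //; exists 1; rewrite div1r. Qed.

Let denom_nz (d : int) : ~~ (p %| `|d|)%N -> d%:~R != 0 :> rat.
Proof. by rewrite intr_eq0; apply: contraNneq => ->. Qed.

Let denom_mul (d1 d2 : int) :
  ~~ (p %| `|d1|)%N -> ~~ (p %| `|d2|)%N -> ~~ (p %| `|(d1 * d2)%R|)%N.
Proof. by move=> pd1 pd2; rewrite abszM Euclid_dvdM // negb_or pd1. Qed.

Lemma pintB x y : pint p x -> pint p y -> pint p (x - y).
Proof.
move=> /pintP[d1 pd1 [m1 ->]] /pintP[d2 pd2 [m2 ->]].
apply/pintP; exists (d1 * d2); first exact: denom_mul.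
exists (m1 * d2 - m2 * d1); rewrite rmorphB !rmorphM /=.
by field; rewrite !denom_nz.
Qed.

Lemma pintM x y : pint p x -> pint p y -> pint p (x * y).
Proof.
move=> /pintP[d1 pd1 [m1 ->]] /pintP[d2 pd2 [m2 ->]].
apply/pintP; exists (d1 * d2); first exact: denom_mul.
exists (m1 * m2); rewrite !rmorphM /=.
by field; rewrite !denom_nz.
Qed.

End PIntegral.

(* The guard [prime p ==>] makes [Zloc p] a subring for every [p], so that the
   instance below can be declared without a primality hypothesis. *)
Definition Zloc (p : nat) : {pred rat} := fun x => prime p ==> pint p x.

Fact Zloc_subring_closed p : subring_closed (Zloc p).
Proof.
split; rewrite /Zloc.
- by apply/implyP => pp; apply: (pint_int pp 1).
- by move=> x y /implyP px /implyP py; apply/implyP => pp; apply: pintB; auto.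
- by move=> x y /implyP px /implyP py; apply/implyP => pp; apply: pintM; auto.
Qed.

HB.instance Definition _ p :=
  GRing.isSubringClosed.Build rat (Zloc p) (Zloc_subring_closed p).

Section Localization.
Variable p : nat.
Hypothesis p_prime : prime p.

Lemma ZlocE x : (x \in Zloc p) = pint p x.
Proof. by rewrite unfold_in /Zloc /= p_prime. Qed.

Lemma Zloc_invn n : (0 < n < p)%N -> n%:R^-1 \in Zloc p.
Proof.
case/andP=> n_gt0 n_lt_p; rewrite ZlocE; apply/pint_invn/negP => //.
by move/(dvdn_leq n_gt0); lia.
Qed.

Lemma Zloc_invfact k : (k < p)%N -> (k`!)%:R^-1 \in Zloc p.
Proof.
elim: k => [|k IHk] k_lt_p; first by rewrite invr1 rpred1.
by rewrite factS natrM invfM rpredM ?IHk ?Zloc_invn //; lia.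
Qed.

Lemma Zloc_decomp a : a \in Zloc p ->
  exists2 r : nat, (r < p)%N & exists2 s, s \in Zloc p & a = r%:R + p%:R * s.
Proof.
rewrite ZlocE /pint => pd.
set m := numq a; set d := denq a.
have /coprimezP[[u v] /= Bezout] : coprimez d p.
  by rewrite coprimezE coprime_sym prime_coprime.
set q := (m * u %/ p)%Z; set r := (m * u %% p)%Z.
have p_gt0 : 0 < p%:Z by rewrite ltz_nat prime_gt0.
have r_ge0 : 0 <= r by rewrite modz_ge0 // gt_eqF.
have d_nz : d%:~R != 0 :> rat by rewrite intr_eq0 denq_neq0.
exists `|r|%N; first by rewrite -ltz_nat gez0_abs ?ltz_pmod.
exists (q%:~R + m%:~R * v%:~R / d%:~R).
  rewrite rpredD ?rpred_int // ZlocE; apply/(pintP p_prime); exists d => //.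
  by exists (m * v); rewrite rmorphM.
have Dr : (`|r|%N%:R : rat) = m%:~R * u%:~R - q%:~R * p%:R.
  have Er : r = m * u - q * p.
    by rewrite [m * u in RHS](divz_eq _ p) -/q -/r addrC addKr.
  have -> : (`|r|%N%:R : rat) = r%:~R by rewrite -[in RHS](gez0_abs r_ge0).
  by rewrite Er rmorphB !rmorphM.
have {}Bezout : u%:~R * d%:~R + v%:~R * p%:R = 1 :> rat.
  by rewrite -[p%:R]/(p%:Z%:~R) -!rmorphM -rmorphD Bezout.
rewrite -[a]divq_num_den -/m -/d Dr.
have -> : m%:~R / d%:~R = m%:~R * (u%:~R * d%:~R + v%:~R * p%:R) / d%:~R :> rat.
  by rewrite Bezout mulr1.
by field.
Qed.

Lemma exprn_interp_Zloc n s i : n \in Zloc p -> s \in Zloc p ->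
  ((n + p%:R * s) ^+ i - (1 + s) * n ^+ i + s * (n - p%:R) ^+ i) / p%:R ^+ 2
    \in Zloc p.
Proof.
move=> Zn Zs; have p_nz : p%:R != 0 :> rat by rewrite pnatr_eq0 -lt0n prime_gt0.
pose D j := (n + p%:R * s) ^+ j - (1 + s) * n ^+ j + s * (n - p%:R) ^+ j.
rewrite -/(D i); elim: i => [|i IHi].
  by rewrite /D !expr0 !mulr1 (_ : 1 - (1 + s) + s = 0) ?mul0r ?rpred0 //; ring.
(* [D (i + 1) = n D i + p s ((n + p s)^i - (n - p)^i)], and that difference is
   divisible by [(n + p s) - (n - p) = p (s + 1)]. *)
set W := \sum_(j < i) (n + p%:R * s) ^+ (i.-1 - j) * (n - p%:R) ^+ j.
have ZW : W \in Zloc p.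
  by apply: rpred_sum => j _; rewrite rpredM ?rpredX ?rpredB ?rpredD ?rpredM ?rpred_nat.
have DW : (n + p%:R * s) ^+ i = p%:R * (s + 1) * W + (n - p%:R) ^+ i.
  by apply/eqP; rewrite -subr_eq subrXX -/W; apply/eqP; congr (_ * _); ring.
have -> : D i.+1 / p%:R ^+ 2 = n * (D i / p%:R ^+ 2) + s * (s + 1) * W.
  by rewrite /D !exprS !DW; field.
by apply: rpredD; [exact: rpredM | rewrite !rpredM ?rpredD ?rpred1].
Qed.

Lemma horner_interp_Zloc P n s :
  P \is a polyOver (Zloc p) -> n \in Zloc p -> s \in Zloc p ->
  (P.[n + p%:R * s] - (1 + s) * P.[n] + s * P.[n - p%:R]) / p%:R ^+ 2 \in Zloc p.
Proof.
move=> /polyOverP ZP Zn Zs.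
have p_nz : p%:R != 0 :> rat by rewrite pnatr_eq0 -lt0n prime_gt0.
rewrite !horner_coef !mulr_sumr -sumrN -!big_split mulr_suml /=.
apply: rpred_sum => i _; rewrite (_ : _ / _ = P`_i * (((n + p%:R * s) ^+ i
  - (1 + s) * n ^+ i + s * (n - p%:R) ^+ i) / p%:R ^+ 2)); last by field.
by rewrite rpredM ?exprn_interp_Zloc.
Qed.

Lemma Zloc_decomp_nondeg a : pint p a ->
  ~ congr_mod p 1 a 0 -> ~ congr_mod p 1 a (-1) ->
  exists2 r : nat, (0 < r < p.-1)%N & exists2 s, s \in Zloc p & a = r%:R + p%:R * s.
Proof.
rewrite -ZlocE => Za a0 a1; have [r r_lt_p [s Zs Da]] := Zloc_decomp Za.
have p_nz : p%:R != 0 :> rat by rewrite pnatr_eq0 -lt0n prime_gt0.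
exists r; last by exists s.
have r_gt0 : (0 < r)%N.
  rewrite lt0n; apply/negP => /eqP r0; apply: a0.
  by rewrite /congr_mod -ZlocE Da r0 add0r subr0 expn1 mulrC mulKf.
suff : r != p.-1 by lia.
apply/negP => /eqP r_eq; apply: a1.
rewrite /congr_mod -ZlocE Da r_eq opprK -addrAC natr1 prednK ?prime_gt0 // expn1.
by rewrite -{1}[p%:R]mulr1 -mulrDr mulrC mulKf // rpredD ?rpred1.
Qed.

Lemma nondeg_mul_addr1_neq0 a :
  ~ congr_mod p 1 a 0 -> ~ congr_mod p 1 a (-1) -> a * (a + 1) != 0.
Proof.
have congr_modxx u : congr_mod p 1 u u.
  by rewrite /congr_mod subrr mul0r; apply: (pint_int p_prime 0).
move=> a0 a1; rewrite mulf_neq0 //; apply/eqP => a_eq; [apply: a0 | apply: a1].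
  by rewrite a_eq.
by rewrite (canRL (addrK 1) a_eq) sub0r.
Qed.

End Localization.

Lemma mul_bin_center k : (k.+1 * 'C(k.+1.*2, k.+1) = 2 * k.*2.+1 * 'C(k.*2, k))%N.
Proof.
have := mul_bin_down k.+1.*2 k.+1; have := mul_bin_diag k.*2.+1 k.
by rewrite doubleS /=; nia.
Qed.

Section LegendreClausen.
Variable R : numFieldType.
Implicit Types (P Q : {poly R}) (x : R).

Local Notation Z := ('X * ('X + 1) : {poly R}).

Lemma deriv_eq0_const P : P^`() = 0 -> P = (P`_0)%:P.
Proof.
move=> P'0; apply/polyP => -[|i]; rewrite coefC //=.
by apply/eqP; move/polyP/(_ i): P'0; rewrite coef_deriv coef0 => /eqP; rewrite mulrn_eq0.
Qed.

Lemma coef_legendre P j :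
  ((Z * P^`())^`())`_j = P`_j.+1 * j.+1%:R ^+ 2 + P`_j * (j * j.+1)%:R.
Proof.
rewrite mulrDr mulr1 mulrDl -mulrA coef_deriv coefD !coefXM /= !coef_deriv.
by case: j => [|j] /=; rewrite ?coefXM ?coef_deriv /=; ring.
Qed.

(* The symmetric square of the Legendre operator [y |-> (Z y')' - x y]: it kills
   the products of two solutions of [(Z y')' = x y]. *)
Definition sym2_op x P : {poly R} :=
  (Z * ((Z * P^`())^`() - (x *+ 2) *: P))^`() - (x *+ 2) *: (Z * P^`()).

Lemma coef_sym2_op_low x P m : (forall i, (i <= m)%N -> P`_i = 0) ->
  (sym2_op x P)`_m = P`_m.+1 * m.+1%:R ^+ 3.
Proof.
move=> P_low; rewrite /sym2_op; set L := (Z * P^`())^`(); set c := x *+ 2.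
have coefL i : L`_i = P`_i.+1 * i.+1%:R ^+ 2 + P`_i * (i * i.+1)%:R.
  exact: coef_legendre.
rewrite !mulrDr !mulr1 !mulrDl -!mulrA coefB coefZ coef_deriv !coefD !coefXM /=.
case: m P_low => [|[|m]] P_low /=;
  rewrite ?coefXM ?coefB ?coefN ?coefZ ?coefL ?coef_deriv /=.
- by rewrite (P_low 0) //; ring.
- by rewrite (P_low 0) // (P_low 1) //; ring.
- by rewrite (P_low m.+1) // (P_low m.+2) //; ring.
Qed.

Lemma sym2_opB x P Q : sym2_op x (P - Q) = sym2_op x P - sym2_op x Q.
Proof. by rewrite /sym2_op -!mul_polyC !(derivB, mulrBr); ring. Qed.

Lemma sym2_op_eq0 x P : sym2_op x P = 0 -> P`_0 = 0 -> P = 0.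
Proof.
move=> P0 P_0; suff P_low m i : (i <= m)%N -> P`_i = 0.
  by apply/polyP => i; rewrite coef0 (P_low i).
elim: m i => [|m IHm] i; first by rewrite leqn0 => /eqP->.
rewrite leq_eqVlt => /orP[/eqP-> | /IHm//].
move/polyP/(_ m): P0; rewrite coef_sym2_op_low // coef0 => /eqP.
by rewrite mulf_eq0 expf_eq0 pnatr_eq0 /= orbF => /eqP.
Qed.

Lemma sym2_op_sqr x P : (Z * P^`())^`() = x *: P -> sym2_op x (P * P) = 0.
Proof.
move=> ode; set E := (Z * P^`())^`() - x *: P.
have E0 : E = 0 by rewrite /E ode subrr.
have dE0 : E^`() = 0 by rewrite E0 deriv0.
suff -> : sym2_op x (P * P) =
    (4%:R *: (Z * P^`()) + 2%:R *: (Z * P)^`()) * E + 2%:R *: (Z * P) * E^`().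
  by rewrite dE0 E0 !mulr0 addr0.
rewrite /sym2_op /E !(derivB, derivD, derivZ, derivM, derivX, derivN).
by rewrite -!mul_polyC; ring.
Qed.

(* [('X M)' - 2 x 'X P'] with [M = z (4 z + 1) P'' + (6 z + 1) P' - 2 x P],
   written out in a form suited to coefficient computations. *)
Definition clausen_op x P : {poly R} :=
  ('X * (4%:R *: ('X * ('X * P^`()^`())) + 'X * P^`()^`() + 6%:R *: ('X * P^`())
         + P^`() - (x *+ 2) *: P))^`()
  - (x *+ 2) *: ('X * P^`()).

Lemma coef_clausen_op x P j : (clausen_op x P)`_j =
  P`_j.+1 * j.+1%:R ^+ 3 - (2 * j + 1)%:R * (x - (j * j.+1)%:R) *+ 2 * P`_j.
Proof.
rewrite /clausen_op coefB coefZ coef_deriv.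
by case: j => [|[|j]] /=; rewrite !(coefD, coefB, coefN, coefZ, coefXM, coef_deriv) /=;
  rewrite ?(coefD, coefB, coefN, coefZ, coefXM, coef_deriv) /=; ring.
Qed.

Lemma sym2_op_comp x P : sym2_op x (P \Po Z) = Z^`() * (clausen_op x P \Po Z).
Proof.
have comp_polyN Q S : (- Q) \Po S = - (Q \Po S) := raddfN _ _.
rewrite /sym2_op /clausen_op.
rewrite !(derivB, derivD, derivZ, derivM, derivX, derivN, deriv_comp, derivC).
rewrite ?(comp_polyB, comp_polyN, comp_polyD, comp_polyZ, comp_polyM).
rewrite ?(comp_polyX, comp_polyC).
rewrite ?(derivB, derivD, derivZ, derivM, derivX, derivN, deriv_comp, derivC).
by rewrite -!mul_polyC; ring.
Qed.

(* With [x = a (a + 1)], [legendre_coef x k = (-1)^k binq a k * binq (-1 - a) k]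
   (lemma [binq_mul_binqN]): all the sums of the theorem depend on [a] through [x]. *)
Definition legendre_coef x k : R :=
  (\prod_(i < k) (x - (i * i.+1)%:R)) / (k`!)%:R ^+ 2.

Lemma legendre_coef0 x : legendre_coef x 0 = 1.
Proof. by rewrite /legendre_coef big_ord0 expr1n divr1. Qed.

Lemma legendre_coefS x k :
  legendre_coef x k.+1 * k.+1%:R ^+ 2 = (x - (k * k.+1)%:R) * legendre_coef x k.
Proof.
have fact_nz i : (i`!)%:R != 0 :> R by rewrite pnatr_eq0 -lt0n fact_gt0.
rewrite /legendre_coef big_ord_recr factS natrM /=; field.
by rewrite fact_nz addrC natr1 pnatr_eq0.
Qed.

Lemma legendre_coef_nat n k : (n < k)%N -> legendre_coef (n * n.+1)%:R k = 0 :> R.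
Proof.
by move=> n_lt_k; rewrite /legendre_coef (bigD1 (Ordinal n_lt_k)) //= subrr mul0r mul0r.
Qed.

Section Clausen.
Variables (x : R) (N : nat).
Hypothesis coef_vanish : forall k, (N <= k)%N -> legendre_coef x k = 0.

Local Notation S := (\poly_(k < N) legendre_coef x k).
Local Notation Y := (\poly_(k < N) (legendre_coef x k * 'C(k.*2, k)%:R)).
Local Notation L := (\poly_(k < N) (legendre_coef x k * 'C(k.*2, k)%:R / k.+1%:R)).

Let coefS k : S`_k = legendre_coef x k.
Proof. by rewrite coef_poly; case: ltnP => // /coef_vanish. Qed.

Let coefY k : Y`_k = legendre_coef x k * 'C(k.*2, k)%:R.
Proof. by rewrite coef_poly; case: ltnP => // /coef_vanish->; rewrite mul0r. Qed.

Lemma legendre_ode : (Z * S^`())^`() = x *: S.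
Proof.
by apply/polyP => j; rewrite coef_legendre coefZ !coefS legendre_coefS; ring.
Qed.

Lemma clausen_ode : clausen_op x Y = 0.
Proof.
apply/polyP => j; rewrite coef_clausen_op coef0 !coefY.
have Cj := congr1 (fun n => n%:R : R) (mul_bin_center j).
rewrite /= !natrM (_ : j.*2.+1 = 2 * j + 1)%N in Cj; last by lia.
have -> : legendre_coef x j.+1 * 'C(j.+1.*2, j.+1)%:R * j.+1%:R ^+ 3
          = legendre_coef x j.+1 * j.+1%:R ^+ 2 * (j.+1%:R * 'C(j.+1.*2, j.+1)%:R).
  by ring.
by rewrite legendre_coefS Cj; ring.
Qed.

Lemma clausen_sqr : S * S = Y \Po Z.
Proof.
apply/eqP; rewrite -subr_eq0; apply/eqP/sym2_op_eq0.
  rewrite sym2_opB sym2_op_sqr ?legendre_ode // sym2_op_comp clausen_ode.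
  by rewrite comp_poly0 mulr0 subrr.
rewrite coefB coef0M !coefS -horner_coef0 horner_comp hornerM hornerX mul0r.
by rewrite horner_coef0 coefY legendre_coef0 bin0 !mulr1 subrr.
Qed.

Lemma deriv_XL : ('X * L)^`() = Y.
Proof.
apply/polyP => j; rewrite coef_deriv coefXM coefY coef_poly /=.
case: ltnP => [_ | /coef_vanish->]; last by rewrite !mul0r mul0rn.
by rewrite -[_ *+ j.+1]mulr_natr divfK ?pnatr_eq0.
Qed.

Lemma legendre_clausen_identity :
  x *: (L \Po Z) = x *: (S * S) - Z * (S^`() * S^`()).
Proof.
(* Multiplied by [Z], both sides vanish at [0] and have derivative [x Z' S^2]. *)
set D := Z * (x *: (S * S) - Z * (S^`() * S^`())) - x *: (('X * L) \Po Z).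
suff D0 : D = 0.
  have Z_nz : Z != 0 by rewrite mulf_neq0 ?polyX_eq0 // -size_poly_eq0 (size_XaddC 1).
  apply: (mulfI Z_nz); apply/eqP; rewrite eq_sym -subr_eq0; apply/eqP.
  have ZL : Z * (L \Po Z) = ('X * L) \Po Z by rewrite comp_polyM comp_polyX.
  by rewrite -scalerAr ZL; exact: D0.
have dD : D^`() = x *: (Z^`() * (S * S - (Y \Po Z)))
                  - 2%:R *: (Z * S^`() * ((Z * S^`())^`() - x *: S)).
  rewrite /D derivB derivZ deriv_comp deriv_XL.
  rewrite !(derivB, derivD, derivZ, derivM, derivX, derivN, derivC).
  by rewrite -!mul_polyC; ring.
have dD0 : D^`() = 0.
  by rewrite dD legendre_ode clausen_sqr !subrr !mulr0 !scaler0 subrr.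
rewrite (deriv_eq0_const dD0) -horner_coef0 /D hornerD hornerN hornerZ horner_comp.
by rewrite !hornerM !hornerX !mul0r mulr0 subrr.
Qed.

End Clausen.
End LegendreClausen.

Lemma map_poly_poly (aR rR : nzRingType) (f : aR -> rR) n (E : nat -> aR) :
  f 0 = 0 -> map_poly f (\poly_(i < n) E i) = \poly_(i < n) f (E i).
Proof. by move=> f0; apply/polyP => i; rewrite coef_map_id0 // !coef_poly; case: ifP. Qed.

Lemma poly_vanish_bound (R : nzRingType) (E : nat -> R) m n :
  (forall k, (m <= k)%N -> E k = 0) -> (m <= n)%N ->
  \poly_(k < n) E k = \poly_(k < m) E k.
Proof.
move=> E0 m_le_n; apply/polyP => i; rewrite !coef_poly.
case: (ltnP i m) => [i_lt_m | /E0->]; last by case: ifP.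
by rewrite (leq_trans i_lt_m m_le_n).
Qed.

Lemma binq_mul_binqN a k :
  binq a k * binq (-1 - a) k = (-1) ^+ k * legendre_coef (a * (a + 1)) k.
Proof.
rewrite /binq /legendre_coef mulf_div -big_split /= mulrA -expr2; congr (_ / _).
rewrite -[k in (-1) ^+ k]card_ord -(prodrN predT).
by apply: eq_bigr => i _; rewrite natrM; ring.
Qed.

Local Notation Z := ('X * ('X + 1) : {poly rat}).

Section StatementSums.
Variable p : nat.
Implicit Types a : rat.

Definition Ssum a : {poly rat} :=
  \sum_(0 <= k < p) (binq a k * binq (-1 - a) k) *: (- 'X) ^+ k.
Definition Tsum a : {poly rat} :=
  \sum_(0 <= k < p) (binq a k * binq (-1 - a) k * k%:R) *: (- 'X) ^+ k.
Definition Lsum a : {poly rat} :=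
  \sum_(0 <= k < p.-1) (binq a k * binq (-1 - a) k * ('C(k.*2, k))%:R / (k.+1)%:R)
                         *: (- ('X * ('X + 1))) ^+ k.
Definition Rsum a : {poly rat} :=
  Ssum a ^+ 2 - (a * (a + 1))^-1 *: (('X + 1) * (Tsum a ^+ 2 %/ 'X)).

Local Notation hS x := (\poly_(k < p) legendre_coef x k).
Local Notation hL x :=
  (\poly_(k < p.-1) (legendre_coef x k * 'C(k.*2, k)%:R / k.+1%:R)).

Let scale_oppX (c : rat) (Q : {poly rat}) k :
  c *: (- Q) ^+ k = ((-1) ^+ k * c) *: Q ^+ k.
Proof. by rewrite -scaleN1r exprZn scalerA mulrC. Qed.

Let signr_mulK k (c : rat) : (-1) ^+ k * ((-1) ^+ k * c) = c.
Proof. by rewrite mulrA -exprMn mulN1r opprK expr1n mul1r. Qed.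

Lemma Ssum_legendre a : Ssum a = hS (a * (a + 1)).
Proof.
rewrite /Ssum big_mkord poly_def; apply: eq_bigr => k _.
by rewrite scale_oppX binq_mul_binqN signr_mulK.
Qed.

Lemma Tsum_legendre a : Tsum a = 'X * (hS (a * (a + 1)))^`().
Proof.
transitivity (\poly_(k < p) (legendre_coef (a * (a + 1)) k * k%:R)).
  rewrite /Tsum big_mkord poly_def; apply: eq_bigr => k _.
  by rewrite scale_oppX binq_mul_binqN -mulrA signr_mulK.
apply/polyP => -[|k]; rewrite coefXM coef_poly /= mulr_natr.
  by case: ifP; rewrite ?mulr0n.
by rewrite coef_deriv coef_poly; case: ifP; rewrite ?mul0rn.
Qed.

Lemma Lsum_legendre a : Lsum a = hL (a * (a + 1)) \Po Z.
Proof.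
rewrite /Lsum big_mkord poly_def linear_sum; apply: eq_bigr => k _.
rewrite linearZ rmorphXn /= comp_polyX scale_oppX binq_mul_binqN.
by rewrite -!mulrA signr_mulK.
Qed.

Lemma Rsum_legendre a (x := a * (a + 1)) :
  Rsum a = hS x ^+ 2 - x^-1 *: (Z * (hS x)^`() ^+ 2).
Proof.
rewrite /Rsum Ssum_legendre Tsum_legendre -/x; congr (_ - _ *: _).
rewrite exprMn expr2 -mulrA mulKp ?polyX_eq0 //.
by rewrite mulrA [('X + 1) * 'X]mulrC.
Qed.

Lemma Lsum_Rsum_nat n : (0 < n < p.-1)%N -> Lsum n%:R = Rsum n%:R.
Proof.
case/andP=> n_gt0 n_lt; rewrite Lsum_legendre Rsum_legendre natr1 -natrM.
set x : rat := (n * n.+1)%:R.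
have x_nz : x != 0 by rewrite pnatr_eq0 muln_eq0 negb_or -lt0n n_gt0.
have coef_vanish k : (p.-1 <= k)%N -> legendre_coef x k = 0.
  by move=> k_ge; apply: legendre_coef_nat; lia.
rewrite (poly_vanish_bound coef_vanish (leq_pred p)).
apply: (scalerI x_nz); rewrite (legendre_clausen_identity coef_vanish).
by rewrite scalerBr scalerA mulfV // scale1r expr2.
Qed.

End StatementSums.

Section BivariateGap.
Variable p : nat.

Local Notation ev x := (map_poly (horner_eval x)).

Definition legendre_coef_poly k : {poly rat} :=
  ((k`!)%:R ^+ 2)^-1 *: \prod_(i < k) ('X - (i * i.+1)%:R%:P).

Definition legendre_dcoef_poly k : {poly rat} :=
  (k.+1%:R / (k.+1`!)%:R ^+ 2) *: \prod_(i < k) ('X - (i.+1 * i.+2)%:R%:P).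

Lemma horner_legendre_coef_poly x k : (legendre_coef_poly k).[x] = legendre_coef x k.
Proof.
rewrite /legendre_coef_poly hornerZ horner_prod mulrC.
by congr (_ * _); apply: eq_bigr => i _; rewrite hornerXsubC.
Qed.

Lemma horner_legendre_dcoef_poly x k :
  x * (legendre_dcoef_poly k).[x] = k.+1%:R * legendre_coef x k.+1.
Proof.
rewrite /legendre_dcoef_poly /legendre_coef hornerZ horner_prod big_ord_recl mul0n subr0.
under eq_bigr do rewrite hornerXsubC.
under [in RHS]eq_bigr do rewrite lift0.
by ring.
Qed.

(* The difference of the two sides of the theorem as a polynomial in [t] whose
   coefficients are polynomials in [x = a (a + 1)], the constant ['X%:P]: the
   division by [x] disappears because [T = x t V] with [V] as below. *)
Definition gap_xy : {poly {poly rat}} :=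
  (\poly_(k < p.-1) (legendre_coef_poly k * ('C(k.*2, k)%:R / k.+1%:R)%:P))
    \Po ('X * ('X + 1))
  - ((\poly_(k < p) legendre_coef_poly k) ^+ 2
     - 'X%:P * ('X * ('X + 1)) * (\poly_(k < p.-1) legendre_dcoef_poly k) ^+ 2).

Lemma gap_xyE a (x := a * (a + 1)) : x != 0 -> ev x gap_xy = Lsum p a - Rsum p a.
Proof.
move=> x_nz; rewrite Lsum_legendre Rsum_legendre -/x.
have ev_poly n E : ev x (\poly_(k < n) E k) = \poly_(k < n) (E k).[x].
  by rewrite map_poly_poly // horner_evalE horner0.
have dS : (\poly_(k < p) legendre_coef x k)^`()
           = x *: \poly_(k < p.-1) (legendre_dcoef_poly k).[x].
  apply/polyP => k; rewrite coef_deriv coefZ !coef_poly -subn1 ltn_subRL add1n.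
  by case: ifP => _; rewrite ?mul0rn ?mulr0 // horner_legendre_dcoef_poly mulr_natl.
rewrite !rmorphB !rmorphXn !rmorphM /= map_comp_poly !ev_poly.
have evX : ev x 'X = 'X := map_polyX _.
rewrite rmorphM !rmorphD !rmorph1 map_polyC /= horner_evalE hornerX.
do ?rewrite evX.
have evS : \poly_(k < p) (legendre_coef_poly k).[x] = \poly_(k < p) legendre_coef x k.
  by apply: eq_poly => k _; rewrite horner_legendre_coef_poly.
have evL : \poly_(k < p.-1) (legendre_coef_poly k * ('C(k.*2, k)%:R / k.+1%:R)%:P).[x]
         = \poly_(k < p.-1) (legendre_coef x k * 'C(k.*2, k)%:R / k.+1%:R).
  by apply: eq_poly => k _; rewrite hornerM hornerC horner_legendre_coef_poly mulrA.
rewrite evS evL dS exprZn -scalerAr scalerA expr2 mulKf // -mul_polyC.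
by ring.
Qed.

Lemma horner_gap_xy_nat i n :
  (0 < n < p.-1)%N -> (gap_xy`_i).[n%:R * (n%:R + 1)] = 0.
Proof.
move=> n_range; have x_nz : n%:R * (n%:R + 1) != 0 :> rat.
  by rewrite natr1 -natrM pnatr_eq0 muln_eq0 negb_or -lt0n (andP n_range).1.
have := congr1 (coefp i) (gap_xyE x_nz).
by rewrite /= coef_map Lsum_Rsum_nat // subrr coef0.
Qed.

Hypothesis p_prime : prime p.

Lemma legendre_coef_poly_Zloc k :
  (k < p)%N -> legendre_coef_poly k \is a polyOver (Zloc p).
Proof.
move=> k_lt_p; rewrite polyOverZ ?rpred_prod // => [|i _]; last first.
  by rewrite polyOverXsubC rpred_nat.
by rewrite -exprVn rpredX ?Zloc_invfact.
Qed.

Lemma legendre_dcoef_poly_Zloc k :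
  (k < p.-1)%N -> legendre_dcoef_poly k \is a polyOver (Zloc p).
Proof.
move=> k_lt; rewrite polyOverZ ?rpred_prod // => [|i _]; last first.
  by rewrite polyOverXsubC rpred_nat.
by rewrite rpredM ?rpred_nat // -exprVn rpredX ?Zloc_invfact //; lia.
Qed.

Lemma gap_xy_Zloc i : gap_xy`_i \is a polyOver (Zloc p).
Proof.
suff /polyOverP : gap_xy \is a polyOver (polyOver_pred (Zloc p)) by apply.
have ZZ : 'X * ('X + 1) \is a polyOver (polyOver_pred (Zloc p)).
  by rewrite rpredM ?rpredD ?polyOverX ?rpred1.
have ZL : \poly_(k < p.-1) (legendre_coef_poly k * ('C(k.*2, k)%:R / k.+1%:R)%:P)
            \is a polyOver (polyOver_pred (Zloc p)).
  apply: polyOver_poly => k k_lt; have p_gt0 := prime_gt0 p_prime.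
  by rewrite rpredM ?legendre_coef_poly_Zloc ?polyOverC ?rpredM ?rpred_nat
       ?Zloc_invn //; lia.
have ZS : \poly_(k < p) legendre_coef_poly k \is a polyOver (polyOver_pred (Zloc p)).
  by apply: polyOver_poly => k; apply: legendre_coef_poly_Zloc.
have ZV : \poly_(k < p.-1) legendre_dcoef_poly k \is a polyOver (polyOver_pred (Zloc p)).
  by apply: polyOver_poly => k; apply: legendre_dcoef_poly_Zloc.
rewrite /gap_xy; apply: rpredB; first exact: polyOver_comp.
apply: rpredB; first exact: rpredX.
apply: rpredM; last exact: rpredX.
by apply: rpredM => //; rewrite polyOverC polyOverX.
Qed.

End BivariateGap.

Theorem theorem2p1 (p : nat) (a : rat) :
  prime p -> odd p -> pint p a ->
  ~ congr_mod p 1 a 0 -> ~ congr_mod p 1 a (-1) ->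
  let S := \sum_(0 <= k < p) (binq a k * binq (-1 - a) k) *: (- 'X) ^+ k in
  let T := \sum_(0 <= k < p) (binq a k * binq (-1 - a) k * k%:R) *: (- 'X) ^+ k in
  pcongr_mod p 2
    (\sum_(0 <= k < p.-1)
        (binq a k * binq (-1 - a) k * ('C(k.*2, k))%:R / (k.+1)%:R)
          *: (- ('X * ('X + 1))) ^+ k)
    (S ^+ 2 - (a * (a + 1))^-1 *: (('X + 1) * (T ^+ 2 %/ 'X))).
Proof.
move=> p_prime _ a_int a0 a1 S T i.
have x_nz := nondeg_mul_addr1_neq0 p_prime a0 a1.
have [r r_range [s Zs Da]] := Zloc_decomp_nondeg p_prime a_int a0 a1.
set P := (gap_xy p)`_i \Po ('X * ('X + 1)).
have ZP : P \is a polyOver (Zloc p).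
  by rewrite polyOver_comp ?gap_xy_Zloc // rpredM ?rpredD ?polyOverX ?rpred1.
have horner_P y : P.[y] = ((gap_xy p)`_i).[y * (y + 1)].
  by rewrite horner_comp hornerM hornerD hornerX hornerC.
have P_r : P.[r%:R] = 0 by rewrite horner_P horner_gap_xy_nat.
(* [y |-> -1 - y] fixes [y (y + 1)] and maps [r - p] to [p - 1 - r]. *)
have P_rp : P.[r%:R - p%:R] = 0.
  have -> : r%:R - p%:R = -1 - (p.-1 - r)%:R :> rat.
    by rewrite -subn1 !natrB ?prime_gt0 //; [ring | lia].
  rewrite horner_P (_ : (-1 - _) * _ = (p.-1 - r)%:R * ((p.-1 - r)%:R + 1)).
    by rewrite horner_gap_xy_nat //; lia.
  by ring.
rewrite /congr_mod -coefB -[_ - _]/(Lsum p a - Rsum p a) -(gap_xyE p x_nz).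
rewrite coef_map /= horner_evalE -horner_P -(ZlocE p_prime) natrX.
have := horner_interp_Zloc p_prime ZP (rpred_nat _ r) Zs.
by rewrite P_r P_rp -Da !mulr0 subr0 addr0.
Qed.
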